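(* Let $U=U_1\times\cdots\times U_m\subset\mathbb{R}^m_+$ (each $U_i\subseteq\mathbb{R}$) be a convex set, $C\subseteq\mathbb{R}^m$, $\overline{U}=U\cap C$. Let $\rho_{\rm adapt}=\rho(\Pi(\overline{U}^\downarrow),\overline{U}^\downarrow)$, $\rho_{\rm aro}=\rho(U^\downarrow,\overline{U}^\downarrow)$ and $\gamma_{\rm ro}=\gamma(U^\downarrow,\Pi(\overline{U}^\downarrow))$. Then $$\rho_{\rm adapt}\ge\frac{\rho_{\rm aro}}{\gamma_{\rm ro}}.$$
   Context: For $S\subseteq\mathbb{R}^m_+$, $S^\downarrow=\{t\in\mathbb{R}^m_+:\exists s\in S,\ t\le s\text{ componentwise}\}$. $\Pi_i(S)$ is the projection of $S$ onto coordinate $i$ and $\Pi(S)=\Pi_1(S)\times\cdots\times\Pi_m(S)$. For $r\ge0$, $rS=\{rx:x\in S\}$; $\rho(S_1,S_2)=\max\{\rho\ge0:\rho S_1\subseteq S_2\}$, $\gamma(S_1,S_2)=\min\{\gamma\ge0:S_2\subseteq\gamma S_1\}$. *)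

From HB Require Import structures.
From mathcomp Require Import all_boot all_order all_algebra.
From mathcomp Require Import classical_sets reals.
Set Implicit Arguments. Unset Strict Implicit. Unset Printing Implicit Defensive.
Import Order.TTheory GRing.Theory Num.Theory.
Local Open Scope ring_scope.
Local Open Scope classical_set_scope.

Section Defs.
Variable R : realType.
Variable m : nat.
Notation vec := ('I_m -> R).

Definition orthant : set vec := [set x | forall i, 0 <= x i].

Definition prod_set (Us : 'I_m -> set R) : set vec := [set x | forall i, Us i (x i)].

Definition convex_set (S : set vec) : Prop :=
  forall x y (t : R), S x -> S y -> 0 <= t -> t <= 1 ->
    S (fun i => t * x i + (1 - t) * y i).

Definition down_cl (S : set vec) : set vec :=
  [set t | (forall i, 0 <= t i) /\ exists s, S s /\ forall i, t i <= s i].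

Definition proj_i (S : set vec) (i : 'I_m) : set R := [set r | exists x, S x /\ x i = r].

Definition Pi_prod (S : set vec) : set vec := [set x | forall i, proj_i S i (x i)].

Definition scale_set (r : R) (S : set vec) : set vec :=
  [set y | exists x, S x /\ (fun i => r * x i) = y].

(* admissible values whose max is rho(S1,S2), resp. whose min is gamma(S1,S2) *)
Definition rho_adm (S1 S2 : set vec) : set R := [set r | 0 <= r /\ scale_set r S1 `<=` S2].
Definition gamma_adm (S1 S2 : set vec) : set R := [set g | 0 <= g /\ S2 `<=` scale_set g S1].

End Defs.

Definition is_max (R : realType) (A : set R) (x : R) : Prop := A x /\ forall y, A y -> y <= x.
Definition is_min (R : realType) (A : set R) (x : R) : Prop := A x /\ forall y, A y -> x <= y.

From HB Require Import structures.
From mathcomp Require Import all_boot all_order all_algebra.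
From mathcomp Require Import boolp classical_sets reals.
Set Implicit Arguments. Unset Strict Implicit. Unset Printing Implicit Defensive.
Import Order.TTheory GRing.Theory Num.Theory.
Local Open Scope ring_scope.
Local Open Scope classical_set_scope.

(* If [r S ⊆ T] and [P ⊆ g S] with [g > 0], then [(r/g) P ⊆ (r/g) g S = r S ⊆ T],
   so [r/g] is admissible for [rho(P, T)].  Applied with [S = U^down],
   [P = Pi(Ubar^down)] and [T = Ubar^down] this gives the theorem. *)

Section ScaleSet.
Variables (R : realType) (m : nat).
Implicit Types (S P T : set ('I_m -> R)) (r s g : R).

Lemma scale_set_sub r S T : S `<=` T -> scale_set r S `<=` scale_set r T.
Proof. by move=> ST _ [x [Sx <-]]; exists x; split; [exact: ST|]. Qed.

Lemma scale_setM r s S : scale_set r (scale_set s S) = scale_set (r * s) S.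
Proof.
apply/seteqP; split=> y.
- move=> [_ [[x [Sx <-]] <-]]; exists x; split => //.
  by apply: funext => i; rewrite mulrA.
- move=> [x [Sx <-]]; exists (fun i => s * x i); split; first by exists x.
  by apply: funext => i; rewrite mulrA.
Qed.

Lemma rho_adm_div S P T r g :
  g != 0 -> rho_adm S T r -> gamma_adm S P g -> rho_adm P T (r / g).
Proof.
move=> g_neq0 [r_ge0 rST] [g_ge0 PgS]; split; first exact: divr_ge0 r_ge0 g_ge0.
apply: subset_trans rST.
have -> : scale_set r S = scale_set (r / g) (scale_set g S) by rewrite scale_setM divfK.
exact: scale_set_sub.
Qed.

End ScaleSet.

Theorem lemma4 (R : realType) (m : nat) (Us : 'I_m -> set R) (C : set ('I_m -> R))
    (rho_adapt rho_aro gamma_ro : R) :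
  prod_set Us `<=` @orthant R m ->
  convex_set (prod_set Us) ->
  is_max (rho_adm (Pi_prod (down_cl (setI (prod_set Us) C))) (down_cl (setI (prod_set Us) C))) rho_adapt ->
  is_max (rho_adm (down_cl (prod_set Us)) (down_cl (setI (prod_set Us) C))) rho_aro ->
  is_min (gamma_adm (down_cl (prod_set Us)) (Pi_prod (down_cl (setI (prod_set Us) C)))) gamma_ro ->
  rho_aro / gamma_ro <= rho_adapt.
Proof.
move=> _ _ [[adapt_ge0 _] adapt_max] [aro_adm _] [ro_adm _].
(* [gamma_ro = 0] is possible (e.g. when [Ubar] is empty); then [rho_aro / 0 = 0]. *)
have [->|ro_neq0] := eqVneq gamma_ro 0; first by rewrite invr0 mulr0.
exact: adapt_max (rho_adm_div ro_neq0 aro_adm ro_adm).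
Qed.
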